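(* Consider the generalized trimmed lasso problem $$\min_{x_0,\ldots,x_L}\ f(x_0,\ldots,x_L)+\sum_{l=1}^L\gamma_l T_{K_l,m_l,p_l}(D_lx_l-c_l),$$ where $f:\mathbb{R}^{n_0+\cdots+n_L}\to\mathbb{R}$ is directionally differentiable and Lipschitz continuous with constant $M$ with respect to the $\ell_2$ norm, and suppose that for every $l\in[L]$ there is $\overline{x}_l$ with $D_l\overline{x}_l=c_l$. Then every d-stationary point $x^*$ satisfies $T_{K_l,m_l,p_l}(D_lx_l^*-c_l)=0$ for all $l\in[L]$ provided $\gamma_l>M/\sigma_{K_l,m_l,p_l}(D_l)$ for all $l\in[L]$. If moreover $p_l=1$, $D_l=I$, $c_l=0$ for all $l\in[L]$ and $f$ is Lipschitz continuous with constant $M'$ with respect to the $\ell_1$ norm, the threshold may be replaced by $\gamma_l>M'$.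
   Context: Trimmed $\ell_1$ norm: $T_{K,m,p}(z)=\min_{\Lambda\subset[m],|\Lambda|=m-K}\sum_{i\in\Lambda}\|z_i\|_2$ for $z=(z_1^\top,\ldots,z_m^\top)^\top$, $z_i\in\mathbb{R}^p$, $K\in\{0,\ldots,m-1\}$. Data: $n_0\ge0$, $\gamma_l>0$, $K_l\in\{0,\ldots,m_l-1\}$, $c_l\in\mathbb{R}^{m_lp_l}$, $D_l\ne0$ an $m_lp_l\times n_l$ matrix. d-stationary: directional derivative of the objective at $x^*$ is $\ge0$ in every direction. $\sigma_{\min}(A)$ = smallest nonzero singular value. For $D$ with $p\times n$ blocks and $(D)_\Lambda$ the submatrix of blocks indexed by $\Lambda$: $\sigma_{K,m,p}(D)=\sigma_{\min}(D)$ if $D$ is surjective, else $\min\{\sigma_{\min}((D)_\Lambda)\mid \Lambda\subset[m],|\Lambda|=m-K,(D)_\Lambda\ne0\}$. *)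

From HB Require Import structures.
From mathcomp Require Import all_boot all_order all_algebra.
From mathcomp Require Import all_classical all_reals all_analysis.
Set Implicit Arguments. Unset Strict Implicit. Unset Printing Implicit Defensive.
Import Order.TTheory GRing.Theory Num.Theory.
Import numFieldNormedType.Exports.
Local Open Scope classical_set_scope.
Local Open Scope ring_scope.

(* A vector z in R^(m p) is split into m consecutive blocks z_1..z_m of
   size p; the j-th entry of block i is z (mxvec_index i j) 0, i.e. the
   entry of (0-based) index i*p + j. *)
Definition blk {R : realType} (m p : nat) (z : 'cV[R]_(m * p)) (i : 'I_m)
  (j : 'I_p) : R := z (mxvec_index i j) ord0.

Definition blk_norm {R : realType} (m p : nat) (z : 'cV[R]_(m * p))
  (i : 'I_m) : R := Num.sqrt (\sum_(j < p) (blk z i j) ^+ 2).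

(* Trimmed l1 norm  T_{K,m,p}(z) = min_{|Lambda| = m - K} sum_{i in Lambda} ||z_i||_2
   (the minimum over a finite nonempty set, written as its infimum). *)
Definition trimmed {R : realType} (K m p : nat) (z : 'cV[R]_(m * p)) : R :=
  inf [set (\sum_(i in Lam) blk_norm z i) | Lam in
        [set Lam : {set 'I_m} | #|Lam| = (m - K)%N]].

Definition sigma_min {R : realType} (r n : nat) (A : 'M[R]_(r, n)) : R :=
  inf [set Num.sqrt a | a in [set a : R | eigenvalue (A^T *m A) a /\ a != 0]].

(* (D)_Lambda : the rows of the blocks indexed by Lambda, represented by
   zeroing all other block-rows of D (zero rows do not change A^T A, hence
   not the nonzero singular values, nor whether the submatrix is 0). *)
Definition blk_sub {R : realType} (m p n : nat) (D : 'M[R]_(m * p, n))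
  (Lam : {set 'I_m}) : 'M[R]_(m * p, n) :=
  \matrix_(r, c) (if [exists i in Lam, exists j : 'I_p, r == mxvec_index i j]
                  then D r c else 0).

Definition surjective_mx {R : realType} (r n : nat) (D : 'M[R]_(r, n)) :=
  forall y : 'cV[R]_r, exists x : 'cV[R]_n, D *m x = y.

Definition sigmaK {R : realType} (K m p n : nat) (D : 'M[R]_(m * p, n)) : R :=
  if `[< surjective_mx D >] then sigma_min D
  else inf [set sigma_min (blk_sub D Lam) | Lam in
        [set Lam : {set 'I_m} | #|Lam| = (m - K)%N /\ blk_sub D Lam != 0]].

Definition vars (R : realType) (L : nat) (n : 'I_L.+1 -> nat) :=
  forall l : 'I_L.+1, 'cV[R]_(n l).

Definition vadd {R : realType} {L : nat} {n : 'I_L.+1 -> nat}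
  (x : vars R n) (t : R) (d : vars R n) : vars R n :=
  fun l => x l + t *: d l.

Definition norm2 {R : realType} {L : nat} {n : 'I_L.+1 -> nat}
  (x : vars R n) : R :=
  Num.sqrt (\sum_(l < L.+1) \sum_(i < n l) (x l i ord0) ^+ 2).

Definition norm1 {R : realType} {L : nat} {n : 'I_L.+1 -> nat}
  (x : vars R n) : R :=
  \sum_(l < L.+1) \sum_(i < n l) `|x l i ord0|.

Definition dquot {R : realType} {L : nat} {n : 'I_L.+1 -> nat}
  (F : vars R n -> R) (x d : vars R n) (t : R) : R :=
  (F (vadd x t d) - F x) / t.

Definition has_dirder {R : realType} {L : nat} {n : 'I_L.+1 -> nat}
  (F : vars R n -> R) (x d : vars R n) (v : R) : Prop :=
  dquot F x d @ 0^'+ --> v.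

Definition dir_differentiable {R : realType} {L : nat} {n : 'I_L.+1 -> nat}
  (F : vars R n -> R) : Prop :=
  forall x d : vars R n, exists v : R, has_dirder F x d v.

Definition d_stationary {R : realType} {L : nat} {n : 'I_L.+1 -> nat}
  (F : vars R n -> R) (x : vars R n) : Prop :=
  forall d : vars R n, exists v : R, has_dirder F x d v /\ 0 <= v.

(* The generalized trimmed lasso objective; the l-th term (l < L, i.e. the
   paper's l+1) acts on x_(l+1) = x (lift ord0 l). *)
Definition objective {R : realType} {L : nat} {n : 'I_L.+1 -> nat}
  (f : vars R n -> R) (gam : 'I_L -> R) (K m p : 'I_L -> nat)
  (D : forall l : 'I_L, 'M[R]_(m l * p l, n (lift ord0 l)))
  (c : forall l : 'I_L, 'cV[R]_(m l * p l)) (x : vars R n) : R :=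
  f x + \sum_(l < L) gam l * @trimmed R (K l) (m l) (p l) (D l *m x (lift ord0 l) - c l).

(* Let z = D_l x_l* - c_l with T(z) > 0, and let Lam be an index set attaining
   the trimmed norm.  For a direction w with (D_l w)_Lam = - z_Lam, moving x_l
   to x_l* + t w (0 < t < 1) scales every block of z in Lam by 1 - t, so the
   penalty drops by at least t gam_l T(z) while f grows by at most t M |w|;
   d-stationarity thus forces gam_l T(z) <= M |w|.  Taking for w a
   minimum-norm preimage gives sigma_{K,m,p}(D_l) |w|_2 <= |z_Lam|_2 <= T(z);
   for D_l = I one takes w = - z_Lam, with |w|_1 <= T(z).  In both cases the
   lower bound on gam_l forces T(z) = 0. *)

From HB Require Import structures.
From mathcomp Require Import all_boot all_order all_algebra.
From mathcomp Require Import all_classical all_reals all_analysis.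
From mathcomp Require Import complex spectral sesquilinear.
From mathcomp Require Import ring lra.
Import Order.TTheory GRing.Theory Num.Theory.
Import numFieldNormedType.Exports.
Set Implicit Arguments. Unset Strict Implicit. Unset Printing Implicit Defensive.
Local Open Scope classical_set_scope.
Local Open Scope ring_scope.

Local Notation toC := (real_complex _).

Section ComplexSpectralTheory.
Local Open Scope sesquilinear_scope.

Lemma real_complex_real (R : rcfType) (x : R) : toC x \is Num.real.
Proof. by rewrite realE !lecR ?(le_total 0 x). Qed.

Lemma Creal_ReE (R : rcfType) (x : R[i]) : x \is Num.real -> x = toC (complex.Re x).
Proof.
case: x => a b; rewrite realE !lecE /= => /orP[]/andP[/eqP bE _]; first by rewrite bE.
by rewrite -bE.
Qed.

Lemma eigenvalue_map_real_complex (R : rcfType) n (S : 'M[R]_n) b :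
  eigenvalue (map_mx toC S) (toC b) = eigenvalue S b.
Proof. by rewrite !eigenvalue_root_char -map_char_poly fmorph_root. Qed.

(* The spectral theorem for real symmetric matrices, obtained from the complex
   Hermitian one: the eigenvalues are real, the eigenbasis may stay complex. *)
Lemma realsym_spectral (R : rcfType) n (S : 'M[R]_n) : S^T = S ->
  exists (P : 'M[R[i]]_n) (d : 'rV[R]_n), [/\ P *m P^t* = 1%:M, P^t* *m P = 1%:M
    & map_mx toC S = P^t* *m diag_mx (map_mx toC d) *m P].
Proof.
move=> S_sym; set Sc := map_mx toC S.
have Sc_herm : Sc \is hermsymmx.
  apply: realsym_hermsym.
    by apply/is_hermitianmxP; rewrite expr0 scale1r map_mx_id // map_trmx S_sym.
  by apply/mxOverP => i j; rewrite mxE real_complex_real.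
have P_unitary := spectral_unitarymx Sc.
exists (spectralmx Sc), (map_mx (@complex.Re R) (spectral_diag Sc)); split.
- exact/unitarymxP.
- by rewrite -invmx_unitary // mulVmx ?unitarymx_unit.
- have /orthomx_spectralP SE := hermitian_normalmx Sc_herm.
  rewrite {1}SE invmx_unitary // -map_mx_comp; congr (_ *m diag_mx _ *m _).
  apply/rowP => j; rewrite !mxE /=.
  by apply: Creal_ReE; apply: (mxOverP (hermitian_spectral_diag_real Sc_herm)).
Qed.

Section RealSpectralDecomposition.
Variables (R : rcfType) (n : nat) (S : 'M[R]_n) (P : 'M[R[i]]_n) (d : 'rV[R]_n).
Hypotheses (PK : P *m P^t* = 1%:M) (PKV : P^t* *m P = 1%:M)
  (SE : map_mx toC S = P^t* *m diag_mx (map_mx toC d) *m P).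

Lemma eigenvalue_spectral_diag j : eigenvalue S (d 0 j).
Proof.
rewrite -eigenvalue_map_real_complex; apply/eigenvalueP; exists (row j P).
  rewrite SE !mulmxA -row_mul PK.
  have -> : row j P = row j 1%:M *m P by rewrite -row_mul mul1mx.
  rewrite scalemxAl; congr (_ *m _); apply/rowP => i.
  by rewrite mul_mx_diag !mxE; case: eqVneq => [->|_]; rewrite ?mulr1 ?mulr0 ?mul1r ?mul0r.
apply/negP => /eqP /(congr1 (fun M => M *m P^t*)).
rewrite -row_mul PK mul0mx => /rowP /(_ j) /eqP.
by rewrite !mxE eqxx oner_eq0.
Qed.

Lemma eigenvalue_spectral_diagP b : eigenvalue S b -> exists j, d 0 j = b.
Proof.
rewrite -eigenvalue_map_real_complex => /eigenvalueP [v hv vn0].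
pose g := v *m P^t*.
have hg : g *m diag_mx (map_mx toC d) = toC b *: g.
  move: hv => /(congr1 (fun M => M *m P^t*)); rewrite SE -scalemxAl.
  by rewrite !mulmxA -!(mulmxA _ P) PK mulmx1.
have vE : v = g *m P by rewrite /g -mulmxA PKV mulmx1.
clearbody g; subst v.
have /existsP [j gj] : [exists j, g 0 j != 0].
  apply: contraR vn0; rewrite negb_exists => /forallP g0; apply/eqP.
  suff -> : g = 0 by rewrite mul0mx.
  by apply/rowP => i; rewrite [RHS]mxE; apply/eqP/negPn/g0.
exists j; apply: (@complexI R).
move/rowP/(_ j): hg; rewrite mul_mx_diag !mxE => hj.
by apply: (mulIf gj); rewrite mulrC hj.
Qed.

Lemma spectral_range_quad_ge a : (forall j, d 0 j != 0 -> a <= d 0 j) ->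
  forall u : 'rV_n,
  a * ((u *m S) *m (u *m S)^T) 0 0 <= ((u *m S) *m S *m (u *m S)^T) 0 0.
Proof.
move=> amin u; rewrite -lecR rmorphM /=.
have mapE m1 m2 (M : 'M[R]_(m1, m2)) i j : toC (M i j) = (map_mx toC M) i j.
  by rewrite mxE.
rewrite !mapE !map_mxM -!map_trmx !map_mxM.
have trE : (map_mx toC u *m map_mx toC S)^T = (map_mx toC u *m map_mx toC S)^t*.
  by rewrite -map_mxM; apply/matrixP => i j; rewrite !mxE conj_Creal // real_complex_real.
pose g := map_mx toC u *m P^t*; pose h := g *m diag_mx (map_mx toC d).
have hE j : h 0 j = g 0 j * toC (d 0 j).
  by rewrite /h mul_mx_diag mxE [(map_mx _ _) 0 j]mxE.
have uSE : map_mx toC u *m map_mx toC S = h *m P by rewrite SE /h /g !mulmxA.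
clearbody h; rewrite trE uSE trmx_mul map_mxM mulmxA -(mulmxA h) PK mulmx1.
rewrite SE !mulmxA -(mulmxA h) PK mulmx1 -!(mulmxA _ P) PK mulmx1.
rewrite !mxE mulr_sumr; apply: ler_sum => j _; rewrite mul_mx_diag !mxE.
have [dj0|dj0] := eqVneq (d 0 j) 0; first by rewrite hE dj0 !(mulr0, rmorph0, mul0r).
rewrite mulrAC [X in X <= _]mulrC; apply: ler_wpM2l; first exact: mul_conjC_ge0.
by rewrite lecR amin.
Qed.

End RealSpectralDecomposition.

End ComplexSpectralTheory.

Section Gramian.
Variable R : rcfType.

Lemma mulmx_trmx_ge0 n (v : 'rV[R]_n) : 0 <= (v *m v^T) 0 0.
Proof. by rewrite mxE; apply: sumr_ge0 => j _; rewrite mxE -expr2 sqr_ge0. Qed.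

Lemma mulmx_trmx_gt0 n (v : 'rV[R]_n) : v != 0 -> 0 < (v *m v^T) 0 0.
Proof.
move=> vn0; rewrite lt_def mulmx_trmx_ge0 andbT; apply: contra vn0.
rewrite mxE psumr_eq0 => [/allP v0|j _]; last by rewrite mxE -expr2 sqr_ge0.
apply/eqP/rowP => j; move/eqP: (v0 j (mem_index_enum _)).
by rewrite !mxE -expr2 => /eqP; rewrite sqrf_eq0 => /eqP.
Qed.

Lemma mulmx_trmx_eq0 p q (C : 'M[R]_(p, q)) : C *m C^T = 0 -> C = 0.
Proof.
move=> CCt0; apply/row_matrixP => i; rewrite row0; apply/eqP/contraT => Ci0.
have := mulmx_trmx_gt0 Ci0.
have -> : (row i C *m (row i C)^T) 0 0 = (C *m C^T) i i.
  by rewrite !mxE; apply: eq_bigr => k _; rewrite !mxE.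
by rewrite CCt0 mxE ltxx.
Qed.

Lemma eigenvalue_gram_ge0 k n (B : 'M[R]_(k, n)) a :
  eigenvalue (B^T *m B) a -> 0 <= a.
Proof.
move=> /eigenvalueP [v vE vn0].
have : (v *m (B^T *m B) *m v^T) 0 0 = a * (v *m v^T) 0 0.
  by rewrite vE -scalemxAl mxE.
rewrite mulmxA -mulmxA -{2}(trmxK B) -trmx_mul => quadE.
by have := mulmx_trmx_ge0 (v *m B^T); rewrite quadE pmulr_lge0 // mulmx_trmx_gt0.
Qed.

(* Over an ordered field B and ker B^T meet trivially, so B B^T has the rank
   of B. *)
Lemma trmx_sub_mulmx_trmx k n (B : 'M[R]_(k, n)) : (B^T <= B *m B^T)%MS.
Proof.
have BBt_sub : (B *m B^T <= B^T)%MS by apply: submxMl.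
have cap0 : (B :&: kermx B^T)%MS = 0.
  apply: mulmx_trmx_eq0.
  have /submxP [D DE] : ((B :&: kermx B^T) <= B)%MS by apply: capmxSl.
  have /sub_kermxP ker0 : ((B :&: kermx B^T) <= kermx B^T)%MS by apply: capmxSr.
  by rewrite [X in _ *m X^T]DE trmx_mul mulmxA ker0 mul0mx.
have := mxrank_mul_ker B B^T; rewrite cap0 mxrank0 addn0 => rkE.
by rewrite -(mxrank_leqif_sup BBt_sub).2 rkE mxrank_tr.
Qed.

Lemma gram_sym k n (B : 'M[R]_(k, n)) : (B^T *m B)^T = B^T *m B.
Proof. by rewrite trmx_mul trmxK. Qed.

Lemma gram_min_eigenvalue k n (B : 'M[R]_(k, n)) : B != 0 ->
  exists a, [/\ 0 < a, eigenvalue (B^T *m B) a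
    & forall b, eigenvalue (B^T *m B) b -> b != 0 -> a <= b].
Proof.
move=> Bn0; have [P [d [PK PKV SE]]] := realsym_spectral (gram_sym B).
have [/existsP [j0 dj0]|] := boolP [exists j, d 0 j != 0]; last first.
  rewrite negb_exists => /forallP d0; case/negP: Bn0.
  apply/eqP/trmx_inj; rewrite trmx0; apply: mulmx_trmx_eq0; rewrite trmxK.
  apply/eqP; rewrite -(map_mx_eq0 (real_complex R)) SE.
  suff -> : map_mx (real_complex R) d = 0 by rewrite raddf0 mulmx0 mul0mx.
  by apply/rowP => j; rewrite !mxE; move/negPn/eqP: (d0 j) => ->.
case: (@arg_minP _ _ _ j0 (fun j => d 0 j != 0) (fun j => d 0 j) dj0) => j jd0 jmin.
exists (d 0 j); split.
- by rewrite lt_def jd0 (eigenvalue_gram_ge0 (eigenvalue_spectral_diag PK SE j)).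
- exact: (eigenvalue_spectral_diag PK SE).
- by move=> b /(eigenvalue_spectral_diagP PK PKV SE) [i <-]; apply: jmin.
Qed.

Lemma gram_range_quad_ge k n (B : 'M[R]_(k, n)) a (v : 'rV[R]_n) :
  (forall b, eigenvalue (B^T *m B) b -> b != 0 -> a <= b) ->
  (v <= B^T *m B)%MS ->
  a * (v *m v^T) 0 0 <= (v *m (B^T *m B) *m v^T) 0 0.
Proof.
move=> amin /submxP [u ->]; have [P [d [PK _ SE]]] := realsym_spectral (gram_sym B).
apply: (spectral_range_quad_ge PK SE) => j dj0.
exact: amin (eigenvalue_spectral_diag PK SE j) dj0.
Qed.

End Gramian.

Definition l2norm (R : realType) n (v : 'cV[R]_n) : R := Num.sqrt (\sum_i v i 0 ^+ 2).
Definition l1norm (R : realType) n (v : 'cV[R]_n) : R := \sum_i `|v i 0|.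

Section SmallestSingularValue.
Variable R : realType.

Lemma l2normE n (v : 'cV[R]_n) : l2norm v = Num.sqrt ((v^T *m v) 0 0).
Proof. by rewrite /l2norm mxE; congr Num.sqrt; apply: eq_bigr => i _; rewrite mxE expr2. Qed.

Lemma l2norm_ge0 n (v : 'cV[R]_n) : 0 <= l2norm v.
Proof. exact: sqrtr_ge0. Qed.

Lemma l2normN n (v : 'cV[R]_n) : l2norm (- v) = l2norm v.
Proof. by congr Num.sqrt; apply: eq_bigr => i _; rewrite mxE sqrrN. Qed.

Lemma l2normZ n (v : 'cV[R]_n) t : 0 <= t -> l2norm (t *: v) = t * l2norm v.
Proof.
move=> t0; rewrite /l2norm -[t in RHS](ger0_norm t0) -sqrtr_sqr -sqrtrM ?sqr_ge0 //.
by congr Num.sqrt; rewrite mulr_sumr; apply: eq_bigr => i _; rewrite mxE exprMn.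
Qed.

Lemma sigma_minE r n (A : 'M[R]_(r, n)) a :
  0 < a -> eigenvalue (A^T *m A) a ->
  (forall b, eigenvalue (A^T *m A) b -> b != 0 -> a <= b) ->
  sigma_min A = Num.sqrt a.
Proof.
move=> a_gt0 a_eig amin; apply/le_anti/andP; split.
  apply: ge_inf; last by exists a => //; split => //; rewrite gt_eqF.
  by exists 0 => _ [b _ <-]; exact: sqrtr_ge0.
apply: lb_le_inf; first by exists (Num.sqrt a), a => //; split => //; rewrite gt_eqF.
by move=> _ [b [b_eig bn0] <-]; rewrite ler_wsqrtr ?amin.
Qed.

Lemma sigma_min_gt0 r n (A : 'M[R]_(r, n)) : A != 0 -> 0 < sigma_min A.
Proof.
move=> An0; have [a [a_gt0 a_eig amin]] := gram_min_eigenvalue An0.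
by rewrite (sigma_minE a_gt0 a_eig amin) sqrtr_gt0.
Qed.

(* The minimum-norm preimage w = A^T (A A^T)^+ y of y = A x0 lies in the row
   space of A, where |A w| >= sigma_min A * |w|. *)
Lemma sigma_min_preimage r n (A : 'M[R]_(r, n)) (x0 : 'cV[R]_n) :
  exists w, A *m w = A *m x0 /\ sigma_min A * l2norm w <= l2norm (A *m x0).
Proof.
set y := A *m x0; have [y0|yn0] := eqVneq y 0.
  exists 0; rewrite mulmx0 y0; split => //.
  by rewrite /l2norm big1 ?sqrtr0 ?mulr0 // => i _; rewrite mxE expr0n.
have An0 : A != 0 by apply: contra yn0 => /eqP A0; rewrite /y A0 mul0mx.
have [a [a_gt0 a_eig amin]] := gram_min_eigenvalue An0.
have yt_sub : (y^T <= A *m A^T)%MS.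
  by apply: submx_trans (trmx_sub_mulmx_trmx A); rewrite /y trmx_mul submxMl.
pose v := y^T *m pinvmx (A *m A^T) *m A.
have vAt : v *m A^T = y^T by rewrite /v -mulmxA mulmxKpV.
have v_sub : (v <= A^T *m A)%MS.
  by apply: submx_trans (submxMl _ A) _; have := trmx_sub_mulmx_trmx A^T; rewrite trmxK.
exists v^T; split; first by rewrite -[A]trmxK -trmx_mul vAt trmxK.
have := gram_range_quad_ge amin v_sub.
rewrite mulmxA vAt -mulmxA -[A in _ *m (A *m _)]trmxK -trmx_mul vAt.
rewrite (sigma_minE a_gt0 a_eig amin) !l2normE !trmxK -sqrtrM ?(ltW a_gt0) //.
exact: ler_wsqrtr.
Qed.

End SmallestSingularValue.

Section BlocksAndTrimmedNorm.
Variable R : realType.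

Lemma sum_mxvec_index m p (F : 'I_(m * p) -> R) :
  \sum_r F r = \sum_i \sum_j F (mxvec_index i j).
Proof.
rewrite (reindex _ (curry_mxvec_bij _ _)) /= pair_bigA.
by apply: eq_bigr => -[i j].
Qed.

Lemma mxvec_index_inj m p (i i' : 'I_m) (j j' : 'I_p) :
  mxvec_index i j = mxvec_index i' j' -> i = i' /\ j = j'.
Proof. by move/cast_ord_inj/enum_rank_inj => [-> ->]. Qed.

Definition in_blocks m p (Lam : {set 'I_m}) (r : 'I_(m * p)) :=
  [exists i in Lam, exists j : 'I_p, r == mxvec_index i j].

Lemma in_blocks_mxvec_index m p (Lam : {set 'I_m}) i (j : 'I_p) :
  in_blocks Lam (mxvec_index i j) = (i \in Lam).
Proof.
apply/existsP/idP => [[i' /andP [i'_in /existsP [j' /eqP /mxvec_index_inj [-> _]]]] //|i_in].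
by exists i; rewrite i_in /=; apply/existsP; exists j.
Qed.

Definition keep_blocks m p (Lam : {set 'I_m}) (z : 'cV[R]_(m * p)) : 'cV[R]_(m * p) :=
  \col_r (if in_blocks Lam r then z r 0 else 0).

Lemma keep_blocksN m p (Lam : {set 'I_m}) (z : 'cV[R]_(m * p)) :
  keep_blocks Lam (- z) = - keep_blocks Lam z.
Proof. by apply/colP => r; rewrite !mxE; case: ifP; rewrite ?oppr0. Qed.

Lemma keep_blocks_id m p (Lam : {set 'I_m}) (z : 'cV[R]_(m * p)) :
  keep_blocks Lam (keep_blocks Lam z) = keep_blocks Lam z.
Proof. by apply/colP => r; rewrite !mxE; case: (in_blocks Lam r). Qed.

Lemma blk_keep_blocks m p (Lam : {set 'I_m}) (z : 'cV[R]_(m * p)) i j :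
  i \in Lam -> blk (keep_blocks Lam z) i j = blk z i j.
Proof. by move=> i_in; rewrite /blk mxE in_blocks_mxvec_index i_in. Qed.

Lemma blk_keep_blocks_notin m p (Lam : {set 'I_m}) (z : 'cV[R]_(m * p)) i j :
  i \notin Lam -> blk (keep_blocks Lam z) i j = 0.
Proof. by move=> i_out; rewrite /blk mxE in_blocks_mxvec_index (negbTE i_out). Qed.

Lemma blk_sub_mulmx m p n (D : 'M[R]_(m * p, n)) Lam (x : 'cV[R]_n) :
  blk_sub D Lam *m x = keep_blocks Lam (D *m x).
Proof.
apply/colP => r; rewrite !mxE /in_blocks; case: ifP => r_in.
  by apply: eq_bigr => c _; rewrite mxE r_in.
by rewrite big1 // => c _; rewrite mxE r_in mul0r.
Qed.

Lemma blk_norm_ge0 m p (z : 'cV[R]_(m * p)) i : 0 <= blk_norm z i.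
Proof. exact: sqrtr_ge0. Qed.

Lemma sumr_sqr_le_sqr_sumr (I : finType) (P : pred I) (F : I -> R) :
  (forall i, P i -> 0 <= F i) ->
  \sum_(i | P i) F i ^+ 2 <= (\sum_(i | P i) F i) ^+ 2.
Proof.
move=> F_ge0; rewrite [X in _ <= X]expr2 mulr_suml; apply: ler_sum => i Pi.
rewrite expr2 ler_wpM2l ?F_ge0 // (bigD1 i Pi) /= lerDl.
by apply: sumr_ge0 => k /andP [Pk _]; exact: F_ge0.
Qed.

Lemma l2norm_keep_blocks_le m p (z : 'cV[R]_(m * p)) (Lam : {set 'I_m}) :
  l2norm (keep_blocks Lam z) <= \sum_(i in Lam) blk_norm z i.
Proof.
have -> : l2norm (keep_blocks Lam z) = Num.sqrt (\sum_(i in Lam) blk_norm z i ^+ 2).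
  rewrite /l2norm sum_mxvec_index (bigID (mem Lam)) /=.
  rewrite [X in _ + X]big1 ?addr0 => [|i i_out]; last first.
    by apply: big1 => j _; rewrite -[keep_blocks _ _ _ _]/(blk _ i j) blk_keep_blocks_notin ?expr0n.
  congr Num.sqrt; apply: eq_bigr => i i_in; rewrite sqr_sqrtr; last first.
    by apply: sumr_ge0 => j _; rewrite sqr_ge0.
  by apply: eq_bigr => j _; rewrite -[keep_blocks _ _ _ _]/(blk _ i j) blk_keep_blocks.
rewrite -(ger0_norm (sumr_ge0 _ (fun i _ => blk_norm_ge0 z i))) -sqrtr_sqr.
by apply/ler_wsqrtr/sumr_sqr_le_sqr_sumr => i _; exact: blk_norm_ge0.
Qed.

Lemma sum_blk_norm_keep_blocks_eq0 m p (z : 'cV[R]_(m * p)) (Lam : {set 'I_m}) :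
  keep_blocks Lam z = 0 -> \sum_(i in Lam) blk_norm z i = 0.
Proof.
move=> z0; apply: big1 => i i_in; rewrite /blk_norm big1 ?sqrtr0 // => j _.
by rewrite -(blk_keep_blocks _ j i_in) z0 /blk mxE expr0n.
Qed.

Lemma exists_card_set m k : (k <= m)%N -> exists Lam : {set 'I_m}, #|Lam| = k.
Proof.
move=> le_km; exists [set widen_ord le_km i | i : 'I_k].
by rewrite card_imset ?card_ord // => a b /(congr1 val) ab; exact: val_inj.
Qed.

Lemma trimmed_le_sum K m p (z : 'cV[R]_(m * p)) (Lam : {set 'I_m}) :
  #|Lam| = (m - K)%N -> trimmed K z <= \sum_(i in Lam) blk_norm z i.
Proof.
move=> Lam_card; apply: ge_inf; last by exists Lam.
by exists 0 => _ [L' _ <-]; apply: sumr_ge0 => i _; exact: blk_norm_ge0.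
Qed.

Lemma trimmed_attained K m p (z : 'cV[R]_(m * p)) : exists Lam : {set 'I_m},
  #|Lam| = (m - K)%N /\ trimmed K z = \sum_(i in Lam) blk_norm z i.
Proof.
have [L0 L0_card] := exists_card_set (leq_subr K m).
have L0P : #|L0| == (m - K)%N by rewrite L0_card.
case: (@arg_minP _ _ _ L0 (fun L : {set 'I_m} => #|L| == (m - K)%N)
   (fun L => \sum_(i in L) blk_norm z i) L0P) => L1 /eqP L1_card L1_min.
exists L1; split => //; apply/le_anti/andP; split; first exact: trimmed_le_sum.
apply: lb_le_inf; first by exists (\sum_(i in L1) blk_norm z i), L1.
by move=> _ [L' /= L'_card <-]; apply: L1_min; rewrite L'_card.
Qed.

Lemma trimmed_ge0 K m p (z : 'cV[R]_(m * p)) : 0 <= trimmed K z.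
Proof.
have [Lam [_ ->]] := trimmed_attained K z.
by apply: sumr_ge0 => i _; exact: blk_norm_ge0.
Qed.

Lemma trimmed_shrink K m p (z e : 'cV[R]_(m * p)) (Lam : {set 'I_m}) t :
  #|Lam| = (m - K)%N -> trimmed K z = \sum_(i in Lam) blk_norm z i ->
  keep_blocks Lam e = - keep_blocks Lam z -> 0 <= t <= 1 ->
  trimmed K (z + t *: e) <= (1 - t) * trimmed K z.
Proof.
move=> Lam_card zE eE /andP [t_ge0 t_le1].
apply: le_trans (trimmed_le_sum _ Lam_card) _; rewrite zE mulr_sumr.
apply: ler_sum => i i_in.
suff -> : blk_norm (z + t *: e) i = (1 - t) * blk_norm z i by [].
have omt_ge0 : 0 <= 1 - t by rewrite subr_ge0.
rewrite /blk_norm -(ger0_norm omt_ge0) -sqrtr_sqr -sqrtrM ?sqr_ge0 // mulr_sumr.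
congr Num.sqrt; apply: eq_bigr => j _; rewrite -exprMn; congr (_ ^+ 2).
have := congr1 (fun v => blk v i j) eE; rewrite /= !blk_keep_blocks //.
by rewrite /blk !mxE in_blocks_mxvec_index i_in => ->; rewrite mulrBl mul1r mulrN addrC.
Qed.

End BlocksAndTrimmedNorm.

Section TrimmedSingularValue.
Variable R : realType.

Lemma sigmaK_blk_sub K m p n (D : 'M[R]_(m * p, n)) (Lam : {set 'I_m}) :
  ~ surjective_mx D -> #|Lam| = (m - K)%N -> blk_sub D Lam != 0 ->
  0 < sigmaK K D <= sigma_min (blk_sub D Lam).
Proof.
move=> Dns Lam_card DLam0; rewrite /sigmaK asboolF //.
set S := [set _ | _ in _].
have S_lb : lbound S 0 by move=> _ [L' [_ DL'0] <-]; exact/ltW/sigma_min_gt0.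
have LamP : (#|Lam| == (m - K)%N) && (blk_sub D Lam != 0) by rewrite Lam_card eqxx.
case: (@arg_minP _ _ _ Lam (fun L : {set 'I_m} => (#|L| == (m - K)%N) && (blk_sub D L != 0))
  (fun L => sigma_min (blk_sub D L)) LamP) => L1 /andP [/eqP L1_card DL10] L1_min.
apply/andP; split; last by apply: ge_inf; [exists 0 | exists Lam].
apply: lt_le_trans (sigma_min_gt0 DL10) _.
apply: lb_le_inf; first by exists (sigma_min (blk_sub D Lam)), Lam.
by move=> _ [L' [L'_card DL'0] <-]; apply: L1_min; rewrite L'_card eqxx.
Qed.

Lemma sigmaK_preimage K m p n (D : 'M[R]_(m * p, n)) (Lam : {set 'I_m})
    (x0 : 'cV[R]_n) :
  #|Lam| = (m - K)%N -> keep_blocks Lam (D *m x0) != 0 ->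
  0 < sigmaK K D /\ exists w, keep_blocks Lam (D *m w) = keep_blocks Lam (D *m x0) /\
    sigmaK K D * l2norm w <= l2norm (keep_blocks Lam (D *m x0)).
Proof.
move=> Lam_card y0; have [Dsurj|Dns] := asboolP (surjective_mx D).
  have [x1 x1E] := Dsurj (keep_blocks Lam (D *m x0)).
  have Dn0 : D != 0 by apply: contra y0 => /eqP D0; rewrite -x1E D0 mul0mx.
  rewrite /sigmaK asboolT //; split; first exact: sigma_min_gt0.
  have [w [wE w_le]] := sigma_min_preimage D x1.
  by exists w; rewrite wE x1E keep_blocks_id -x1E.
have DLam0 : blk_sub D Lam != 0.
  by apply: contra y0 => /eqP D0; rewrite -blk_sub_mulmx D0 mul0mx.
have /andP [sK_gt0 sK_le] := sigmaK_blk_sub Dns Lam_card DLam0; split => //.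
have [w [wE w_le]] := sigma_min_preimage (blk_sub D Lam) x0.
exists w; rewrite -!blk_sub_mulmx wE; split => //.
by apply: le_trans w_le; rewrite ler_wpM2r ?l2norm_ge0.
Qed.

End TrimmedSingularValue.

Section SingleBlockDirection.
Variables (R : realType) (L : nat) (n : 'I_L.+1 -> nat).

Definition vars_at (k0 : 'I_L.+1) (w : 'cV[R]_(n k0)) : vars R n :=
  fun k => if k0 =P k is ReflectT e then ecast k ('cV[R]_(n k)) e w else 0.

Lemma vars_at_id k0 (w : 'cV[R]_(n k0)) : vars_at w k0 = w.
Proof. by rewrite /vars_at; case: eqP => // e; rewrite (eq_axiomK e). Qed.

Lemma vars_at_neq k0 (w : 'cV[R]_(n k0)) k : k0 != k -> vars_at w k = 0.
Proof. by rewrite /vars_at; case: eqP. Qed.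

Lemma vadd_vars_at_sub (x : vars R n) k0 (w : 'cV[R]_(n k0)) t :
  vadd (vadd x t (vars_at w)) (-1) x = vars_at (t *: w).
Proof.
apply: functional_extensionality_dep => k.
rewrite /vadd scaleN1r addrAC subrr add0r /vars_at.
by case: eqP => [e|_]; [case: k / e | rewrite scaler0].
Qed.

Lemma norm2_vars_at k0 (w : 'cV[R]_(n k0)) : norm2 (vars_at w) = l2norm w.
Proof.
rewrite /norm2 (bigD1 k0) //= vars_at_id [X in _ + X]big1 ?addr0 // => k k_neq.
by apply: big1 => i _; rewrite vars_at_neq 1?eq_sym // mxE expr0n.
Qed.

Lemma norm1_vars_at k0 (w : 'cV[R]_(n k0)) : norm1 (vars_at w) = l1norm w.
Proof.
rewrite /norm1 (bigD1 k0) //= vars_at_id [X in _ + X]big1 ?addr0 // => k k_neq.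
by apply: big1 => i _; rewrite vars_at_neq 1?eq_sym // mxE normr0.
Qed.

End SingleBlockDirection.

Section DStationaryPoints.
Variables (R : realType) (L : nat) (n : 'I_L.+1 -> nat) (f : vars R n -> R)
  (gam : 'I_L -> R) (K m p : 'I_L -> nat)
  (D : forall l : 'I_L, 'M[R]_(m l * p l, n (lift ord0 l)))
  (c : forall l : 'I_L, 'cV[R]_(m l * p l)) (xs : vars R n) (l : 'I_L).

Local Notation F := (objective f gam K D c).
Local Notation z := (D l *m xs (lift ord0 l) - c l).

Lemma objective_vars_at_sub (w : 'cV[R]_(n (lift ord0 l))) t :
  F (vadd xs t (vars_at w)) - F xs = f (vadd xs t (vars_at w)) - f xs +
    gam l * (trimmed (K l) (z + t *: (D l *m w)) - trimmed (K l) z).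
Proof.
have others_eq : \sum_(i < L | i != l)
    gam i * trimmed (K i) (D i *m vadd xs t (vars_at w) (lift ord0 i) - c i) =
    \sum_(i < L | i != l) gam i * trimmed (K i) (D i *m xs (lift ord0 i) - c i).
  apply: eq_bigr => i i_neq.
  by rewrite /vadd vars_at_neq ?scaler0 ?addr0 // (inj_eq lift_inj) eq_sym.
rewrite /objective (bigD1 l) //= [in X in _ - X](bigD1 l) //= others_eq.
rewrite /vadd vars_at_id mulmxDr -scalemxAr [_ + t *: _ - _]addrAC; ring.
Qed.

Lemma d_stationary_trimmed_le (w : 'cV[R]_(n (lift ord0 l))) (N : R)
    (Lam : {set 'I_(m l)}) :
  d_stationary F xs -> 0 <= gam l ->
  (forall t, 0 < t -> `|f (vadd xs t (vars_at w)) - f xs| <= t * N) ->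
  #|Lam| = (m l - K l)%N -> trimmed (K l) z = \sum_(i in Lam) blk_norm z i ->
  keep_blocks Lam (D l *m w) = - keep_blocks Lam z ->
  gam l * trimmed (K l) z <= N.
Proof.
move=> xs_stat gam_ge0 f_lip Lam_card zE wE.
have [v [v_der v_ge0]] := xs_stat (vars_at w).
suff : v <= N - gam l * trimmed (K l) z by lra.
apply: (cvgr_to_le v_der); near=> t.
have t_gt0 : 0 < t by near: t; exact: nbhs_right_gt.
have t_lt1 : t < 1 by near: t; apply: nbhs_right_lt; exact: ltr01.
have T_le := trimmed_shrink Lam_card zE wE (t := t).
rewrite /dquot ler_pdivrMr // objective_vars_at_sub.
have := le_trans (ler_norm _) (f_lip t t_gt0).
have := ler_wpM2l gam_ge0 (T_le _); rewrite (ltW t_gt0) (ltW t_lt1) => /(_ isT).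
nra.
Unshelve. all: by end_near.
Qed.

End DStationaryPoints.

Section L1Norm.
Variable R : realType.

Lemma l1norm_ge0 n (v : 'cV[R]_n) : 0 <= l1norm v.
Proof. exact/sumr_ge0. Qed.

Lemma l1normN n (v : 'cV[R]_n) : l1norm (- v) = l1norm v.
Proof. by apply: eq_bigr => i _; rewrite mxE normrN. Qed.

Lemma l1normZ n (v : 'cV[R]_n) t : 0 <= t -> l1norm (t *: v) = t * l1norm v.
Proof.
by move=> t_ge0; rewrite /l1norm mulr_sumr; apply: eq_bigr => i _; rewrite mxE normrM ger0_norm.
Qed.

Lemma l1norm_trmx_mul_le k n (B : 'M[R]_(k, n)) (v : 'cV[R]_k) :
  (forall i j, 0 <= B i j) -> (forall i, \sum_j B i j <= 1) ->
  l1norm (B^T *m v) <= l1norm v.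
Proof.
move=> B_ge0 B_row; apply: (@le_trans _ _ (\sum_j \sum_i B i j * `|v i 0|)).
  apply: ler_sum => j _; rewrite mxE; apply: le_trans (ler_norm_sum _ _ _) _.
  by apply: ler_sum => i _; rewrite mxE normrM ger0_norm.
rewrite exchange_big; apply: ler_sum => i _; rewrite -mulr_suml.
by rewrite ler_piMl ?normr_ge0.
Qed.

Lemma sumr_abs_ord1 q (F : 'I_q -> R) :
  q = 1%N -> \sum_j `|F j| = Num.sqrt (\sum_j F j ^+ 2).
Proof. by move=> q1; move: F; rewrite q1 => F; rewrite !big_ord1 sqrtr_sqr. Qed.

Lemma l1norm_keep_blocks m p (z : 'cV[R]_(m * p)) (Lam : {set 'I_m}) :
  p = 1%N -> l1norm (keep_blocks Lam z) = \sum_(i in Lam) blk_norm z i.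
Proof.
move=> p1; rewrite /l1norm sum_mxvec_index (bigID (mem Lam)) /=.
rewrite [X in _ + X]big1 ?addr0 => [|i i_out]; last first.
  by apply: big1 => j _; rewrite -[keep_blocks _ _ _ _]/(blk _ i j) blk_keep_blocks_notin ?normr0.
apply: eq_bigr => i i_in; rewrite /blk_norm -(sumr_abs_ord1 _ p1).
by apply: eq_bigr => j _; rewrite -[keep_blocks _ _ _ _]/(blk _ i j) blk_keep_blocks.
Qed.

End L1Norm.

Section Selection.
Variables (R : realType) (k n : nat) (B : 'M[R]_(k, n)).
Hypotheses (le_kn : (k <= n)%N) (BE : forall i j, B i j = (val i == val j)%:R).

Let widen i := widen_ord le_kn i.

Lemma selection_row_sum i : \sum_j B i j = 1.
Proof.
rewrite (bigD1 (widen i)) //= BE eqxx big1 ?addr0 // => j j_neq.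
by rewrite BE; case: eqP => // ij; case/eqP: j_neq; apply: val_inj.
Qed.

Lemma selection_mulmx_trmx : B *m B^T = 1%:M.
Proof.
apply/matrixP => i i'; rewrite !mxE (bigD1 (widen i)) //= big1 ?addr0 => [|j j_neq].
  by rewrite mxE !BE eqxx mul1r eq_sym.
rewrite mxE !BE; case: eqP => [ij|]; last by rewrite mul0r.
by case/eqP: j_neq; apply: val_inj.
Qed.

End Selection.

Lemma eq0_of_scaled_bound (R : realFieldType) (T W g s M : R) :
  0 <= T -> 0 <= W -> 0 < s -> 0 < g ->
  g * T <= M * W -> s * W <= T -> M / s < g -> T = 0.
Proof.
move=> T_ge0 W_ge0 s_gt0 g_gt0.
have -> : M = (M / s) * s by rewrite divfK ?gt_eqF.
rewrite mulfK ?gt_eqF //; move: (M / s) => q gT_le sW_le q_lt.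
apply/le_anti; rewrite T_ge0 andbT.
have [q_le0|q_gt0] := lerP q 0.
  have : g * T <= 0.
    by apply: le_trans gT_le _; rewrite -mulrA mulr_le0_ge0 // mulr_ge0 // ltW.
  by rewrite pmulr_rle0.
have : g * T <= q * T.
  by apply: le_trans gT_le _; rewrite -mulrA; apply: ler_wpM2l => //; exact: ltW.
by rewrite -subr_ge0 -mulrBl nmulr_rge0 // subr_lt0.
Qed.

Section TrimmedLassoStationarity.
Variables (R : realType) (L : nat) (n : 'I_L.+1 -> nat) (f : vars R n -> R)
  (gam : 'I_L -> R) (K m p : 'I_L -> nat)
  (D : forall l : 'I_L, 'M[R]_(m l * p l, n (lift ord0 l)))
  (c : forall l : 'I_L, 'cV[R]_(m l * p l)) (xs : vars R n) (l : 'I_L).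
Hypotheses (xs_stat : d_stationary (objective f gam K D c) xs) (gam_gt0 : 0 < gam l).

Local Notation z := (D l *m xs (lift ord0 l) - c l).

Lemma trimmed_eq0_l2_lipschitz {M : R} :
  (exists xb, D l *m xb = c l) ->
  (forall x y : vars R n, `|f x - f y| <= M * norm2 (vadd x (-1) y)) ->
  M / sigmaK (K l) (D l) < gam l -> trimmed (K l) z = 0.
Proof.
move=> [xb xbE] f_lip gam_big.
have [Lam [Lam_card zE]] := trimmed_attained (K l) z.
have [z0|zLam0] := eqVneq (keep_blocks Lam z) 0.
  by rewrite zE sum_blk_norm_keep_blocks_eq0.
have DxE : D l *m (xb - xs (lift ord0 l)) = - z by rewrite mulmxBr xbE opprB.
have [|sK_gt0 [w []]] := sigmaK_preimage (D := D l) (x0 := xb - xs (lift ord0 l)) Lam_card.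
  by rewrite DxE keep_blocksN oppr_eq0.
rewrite DxE keep_blocksN l2normN => wE w_le.
apply: (eq0_of_scaled_bound (trimmed_ge0 _ _) (l2norm_ge0 w) sK_gt0 gam_gt0 _ _ gam_big).
  apply: (d_stationary_trimmed_le xs_stat (ltW gam_gt0) _ Lam_card zE wE) => t t_gt0.
  have := f_lip (vadd xs t (vars_at w)) xs.
  by rewrite vadd_vars_at_sub norm2_vars_at l2normZ ?(ltW t_gt0) // mulrCA.
by apply: le_trans w_le _; rewrite zE l2norm_keep_blocks_le.
Qed.

Lemma trimmed_eq0_l1_lipschitz {M' : R} :
  p l = 1%N -> m l = n (lift ord0 l) ->
  (forall i j, D l i j = ((val i == val j)%:R : R)) ->
  (forall x y : vars R n, `|f x - f y| <= M' * norm1 (vadd x (-1) y)) ->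
  M' < gam l -> trimmed (K l) z = 0.
Proof.
move=> p1 mn DE f_lip gam_big.
have le_mpn : (m l * p l <= n (lift ord0 l))%N by rewrite p1 muln1 mn.
have [Lam [Lam_card zE]] := trimmed_attained (K l) z.
pose w := - ((D l)^T *m keep_blocks Lam z).
have DwE : D l *m w = - keep_blocks Lam z.
  by rewrite mulmxN mulmxA (selection_mulmx_trmx le_mpn DE) mul1mx.
have wE : keep_blocks Lam (D l *m w) = - keep_blocks Lam z.
  by rewrite DwE keep_blocksN keep_blocks_id.
have w_le : 1 * l1norm w <= trimmed (K l) z.
  rewrite mul1r zE -(l1norm_keep_blocks _ _ p1) l1normN.
  apply: l1norm_trmx_mul_le => [i j|i]; first by rewrite DE ler0n.
  by rewrite (selection_row_sum le_mpn DE).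
apply: (eq0_of_scaled_bound (M := M') (trimmed_ge0 _ _) (l1norm_ge0 w) ltr01 gam_gt0 _ w_le);
  last by rewrite divr1.
apply: (d_stationary_trimmed_le xs_stat (ltW gam_gt0) _ Lam_card zE wE) => t t_gt0.
have := f_lip (vadd xs t (vars_at w)) xs.
by rewrite vadd_vars_at_sub norm1_vars_at l1normZ ?(ltW t_gt0) // mulrCA.
Qed.

End TrimmedLassoStationarity.

Theorem mainTheorem6 (R : realType) (L : nat) (n : 'I_L.+1 -> nat)
  (gam : 'I_L -> R) (K m p : 'I_L -> nat)
  (D : forall l : 'I_L, 'M[R]_(m l * p l, n (lift ord0 l)))
  (c : forall l : 'I_L, 'cV[R]_(m l * p l))
  (f : vars R n -> R) (M : R) :
  (forall l, 0 < gam l) ->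
  (forall l, (K l < m l)%N) ->
  (forall l, D l != 0) ->
  (forall l, exists xb : 'cV[R]_(n (lift ord0 l)), D l *m xb = c l) ->
  dir_differentiable f ->
  (forall x y : vars R n, `|f x - f y| <= M * norm2 (vadd x (-1) y)) ->
  (forall xs : vars R n,
     d_stationary (objective f gam K D c) xs ->
     (forall l, M / sigmaK (K l) (D l) < gam l) ->
     forall l, trimmed (K l) (D l *m xs (lift ord0 l) - c l) = 0)
  /\
  ((forall l, p l = 1%N) ->
   (forall l, m l = n (lift ord0 l)) ->
   (forall l i j, D l i j = ((val i == val j)%:R : R)) ->
   (forall l, c l = 0) ->
   forall M' : R,
   (forall x y : vars R n, `|f x - f y| <= M' * norm1 (vadd x (-1) y)) ->
   forall xs : vars R n,
     d_stationary (objective f gam K D c) xs ->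
     (forall l, M' < gam l) ->
     forall l, trimmed (K l) (D l *m xs (lift ord0 l) - c l) = 0).
Proof.
move=> gam_gt0 _ _ c_range _ f_lip2; split.
  move=> xs xs_stat gam_big l.
  exact: (trimmed_eq0_l2_lipschitz xs_stat (gam_gt0 l) (c_range l) f_lip2 (gam_big l)).
move=> p1 mn DE _ M' f_lip1 xs xs_stat gam_big l.
exact: (trimmed_eq0_l1_lipschitz xs_stat (gam_gt0 l) (p1 l) (mn l) (DE l) f_lip1 (gam_big l)).
Qed.
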